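(* Consider the continuous-stage Runge–Kutta–Nyström (csRKN) method with coefficients $(\bar{A}_{\tau,\sigma},\bar{B}_\tau,B_\tau,C_\tau)$ applied to $q''=f(t,q)$. Suppose that for all $\tau,\sigma\in[0,1]$ \begin{align*} C_\tau&=1-C_{1-\tau},\\ \bar{A}_{\tau,\sigma}&=B_{1-\sigma}(1-C_{1-\tau})-\bar{B}_{1-\sigma}+\bar{A}_{1-\tau,1-\sigma},\\ \bar{B}_\tau&=B_{1-\tau}-\bar{B}_{1-\tau},\\ B_\tau&=B_{1-\tau}. \end{align*} Then the csRKN method is symmetric.
   Context: Consider the initial value problem $q''=f(t,q)$, $q(t_0)=q_0$, $q'(t_0)=q'_0$, where $f:\mathbb{R}\times\mathbb{R}^d\to\mathbb{R}^d$ is smooth. Let $\bar{A}_{\tau,\sigma}$ be a (sufficiently regular, e.g. integrable/continuous) real function of $\tau,\sigma\in[0,1]$ and $\bar{B}_\tau,B_\tau,C_\tau$ real functions of $\tau\in[0,1]$. The csRKN method with step size $h$ maps $(q_0,q'_0)$ to $(q_1,q'_1)$ by $$Q_\tau=q_0+hC_\tau q'_0+h^2\int_0^1\bar{A}_{\tau,\sigma}f(t_0+C_\sigma h,Q_\sigma)\,d\sigma,\quad \tau\in[0,1],$$ $$q_1=q_0+hq'_0+h^2\int_0^1\bar{B}_\tau f(t_0+C_\tau h,Q_\tau)\,d\tau,\qquad q'_1=q'_0+h\int_0^1 B_\tau f(t_0+C_\tau h,Q_\tau)\,d\tau,$$ with $t_1=t_0+h$. A one-step method $\Phi_h$ is called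 symmetric if $\Phi_h^*=\Phi_h$, where the adjoint method is $\Phi_h^*=\Phi_{-h}^{-1}$; equivalently, exchanging $h\leftrightarrow -h$, $(q_0,q'_0)\leftrightarrow(q_1,q'_1)$ and $t_0\leftrightarrow t_1$ in the defining equations yields the same method. *)

From Stdlib Require Import Reals.
Open Scope R_scope.

Definition vec (d : nat) : Type := {i : nat | (i < d)%nat} -> R.

Definition has_integral01 (g : R -> R) (v : R) : Prop :=
  exists pr : Riemann_integrable g 0 1, RiemannInt pr = v.

(* One step of the csRKN method with coefficients (Abar, Bbar, B, C),
   step size h, starting time t0, applied to q'' = f(t,q):
   (q0, p0) is mapped to (q1, p1) (p = q'). *)
Definition csRKN_step (d : nat) (Abar : R -> R -> R) (Bbar B C : R -> R)
  (f : R -> vec d -> vec d) (h t0 : R) (q0 p0 q1 p1 : vec d) : Prop :=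
  exists Q : R -> vec d,
    (forall tau, 0 <= tau <= 1 -> forall i,
       exists I, has_integral01
                   (fun sigma => Abar tau sigma * f (t0 + C sigma * h) (Q sigma) i) I
              /\ Q tau i = q0 i + h * C tau * p0 i + h ^ 2 * I) /\
    (forall i,
       exists I, has_integral01
                   (fun tau => Bbar tau * f (t0 + C tau * h) (Q tau) i) I
              /\ q1 i = q0 i + h * p0 i + h ^ 2 * I) /\
    (forall i,
       exists I, has_integral01
                   (fun tau => B tau * f (t0 + C tau * h) (Q tau) i) I
              /\ p1 i = p0 i + h * I).

(* Symmetry: the adjoint method Phi_{-h}^{-1} coincides with Phi_h, i.e.
   exchanging h <-> -h, (q0,p0) <-> (q1,p1), t0 <-> t1 = t0 + h in the
   defining relations yields the same method. *)
Definition csRKN_symmetric (d : nat) (Abar : R -> R -> R) (Bbar B C : R -> R)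
  (f : R -> vec d -> vec d) : Prop :=
  forall (h t0 : R) (q0 p0 q1 p1 : vec d),
    csRKN_step d Abar Bbar B C f h t0 q0 p0 q1 p1 <->
    csRKN_step d Abar Bbar B C f (- h) (t0 + h) q1 p1 q0 p0.

From Stdlib Require Import Reals Lra.
From Coquelicot Require Import Coquelicot.
Open Scope R_scope.

(* Let (q0,p0) -> (q1,p1) be a step with stage Q and write
   F(tau) = f(t0 + C_tau h, Q_tau).  For the adjoint step (step -h, start
   t1 = t0 + h, data (q1,p1) -> (q0,p0)) we take the reflected stage
   tau |-> Q_{1-tau}; since C_tau = 1 - C_{1-tau}, its integrand at sigma is
   F(1 - sigma).  Substituting sigma |-> 1 - sigma in the integrals of the
   original step, the coefficient symmetry conditions turn the adjoint's
   integrals into linear combinations of the original ones, and the defining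
   equations of the adjoint step follow by linear algebra.  Applying this
   implication once more to the adjoint step (with -h, t0 + h) gives the
   converse, hence symmetry. *)

Lemma has_integral01_is_RInt (g : R -> R) (v : R) :
  has_integral01 g v <-> is_RInt g 0 1 v.
Proof.
  split.
  - intros [pr <-]. rewrite <- RInt_Reals.
    apply (RInt_correct (V := R_CompleteNormedModule)), ex_RInt_Reals_1; exact pr.
  - intros H. exists (ex_RInt_Reals_0 _ _ _ (ex_intro _ v H)).
    rewrite <- RInt_Reals. apply is_RInt_unique; exact H.
Qed.

Lemma has_integral01_ext (g1 g2 : R -> R) (v : R) :
  (forall x, 0 <= x <= 1 -> g1 x = g2 x) ->
  has_integral01 g1 v -> has_integral01 g2 v.
Proof.
  rewrite !has_integral01_is_RInt. intros Heq H.
  apply (is_RInt_ext g1); [|exact H].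
  intros x Hx. rewrite Rmin_left, Rmax_right in Hx by lra. apply Heq; lra.
Qed.

Lemma has_integral01_plus (g1 g2 : R -> R) (v1 v2 : R) :
  has_integral01 g1 v1 -> has_integral01 g2 v2 ->
  has_integral01 (fun x => g1 x + g2 x) (v1 + v2).
Proof.
  rewrite !has_integral01_is_RInt. apply (is_RInt_plus g1 g2).
Qed.

Lemma has_integral01_scal (a : R) (g : R -> R) (v : R) :
  has_integral01 g v -> has_integral01 (fun x => a * g x) (a * v).
Proof.
  rewrite !has_integral01_is_RInt. apply (is_RInt_scal g).
Qed.

Lemma has_integral01_reflect (g : R -> R) (v : R) :
  has_integral01 g v -> has_integral01 (fun x => g (1 - x)) v.
Proof.
  rewrite !has_integral01_is_RInt. intros H.
  assert (Hrev : is_RInt g (-1 * 0 + 1) (-1 * 1 + 1) (opp v)).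
  { replace (-1 * 0 + 1) with 1 by ring. replace (-1 * 1 + 1) with 0 by ring.
    apply (is_RInt_swap g); exact H. }
  apply is_RInt_comp_lin, (is_RInt_scal _ _ _ (-1)) in Hrev.
  replace v with (scal (-1) (opp v))
    by (unfold scal, opp; simpl; unfold mult; simpl; ring).
  refine (is_RInt_ext _ _ _ _ _ _ Hrev). intros x _.
  unfold scal; simpl; unfold mult; simpl.
  replace (-1 * x + 1) with (1 - x) by ring. ring.
Qed.

Section ReflectedStep.

Variables (d : nat) (Abar : R -> R -> R) (Bbar B C : R -> R).
Hypothesis HC : forall tau, 0 <= tau <= 1 -> C tau = 1 - C (1 - tau).
Hypothesis HA : forall tau sigma, 0 <= tau <= 1 -> 0 <= sigma <= 1 ->
  Abar tau sigma = B (1 - sigma) * (1 - C (1 - tau)) - Bbar (1 - sigma)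
                   + Abar (1 - tau) (1 - sigma).
Hypothesis HBbar : forall tau, 0 <= tau <= 1 -> Bbar tau = B (1 - tau) - Bbar (1 - tau).
Hypothesis HB : forall tau, 0 <= tau <= 1 -> B tau = B (1 - tau).

Lemma reflected_B_integral (F : R -> R) (IB : R) :
  has_integral01 (fun s => B s * F s) IB ->
  has_integral01 (fun s => B s * F (1 - s)) IB.
Proof.
  intros HIB. apply has_integral01_reflect in HIB.
  refine (has_integral01_ext _ _ _ _ HIB). intros x Hx.
  rewrite (HB x Hx). reflexivity.
Qed.

Lemma reflected_Bbar_integral (F : R -> R) (IBbar IB : R) :
  has_integral01 (fun s => Bbar s * F s) IBbar ->
  has_integral01 (fun s => B s * F s) IB ->
  has_integral01 (fun s => Bbar s * F (1 - s)) (IB - IBbar).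
Proof.
  intros HIBbar HIB.
  pose proof (has_integral01_plus _ _ _ _ (has_integral01_reflect _ _ HIB)
                (has_integral01_scal (-1) _ _ (has_integral01_reflect _ _ HIBbar))) as H.
  replace (IB - IBbar) with (IB + -1 * IBbar) by ring.
  refine (has_integral01_ext _ _ _ _ H). intros x Hx.
  rewrite (HBbar x Hx). ring.
Qed.

Lemma reflected_Abar_integral (F : R -> R) (tau IA IBbar IB : R) :
  0 <= tau <= 1 ->
  has_integral01 (fun s => Abar (1 - tau) s * F s) IA ->
  has_integral01 (fun s => Bbar s * F s) IBbar ->
  has_integral01 (fun s => B s * F s) IB ->
  has_integral01 (fun s => Abar tau s * F (1 - s)) (C tau * IB - IBbar + IA).
Proof.
  intros Htau HIA HIBbar HIB.
  pose proof (has_integral01_plus _ _ _ _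
                (has_integral01_scal (C tau) _ _ (has_integral01_reflect _ _ HIB))
                (has_integral01_reflect _ _ HIA)) as H.
  pose proof (has_integral01_plus _ _ _ _ H
                (has_integral01_scal (-1) _ _ (has_integral01_reflect _ _ HIBbar))) as H'.
  replace (C tau * IB - IBbar + IA) with (C tau * IB + IA + -1 * IBbar) by ring.
  refine (has_integral01_ext _ _ _ _ H'). intros x Hx.
  rewrite (HA tau x Htau Hx), <- (HC tau Htau). ring.
Qed.

Lemma adjoint_stage_time (h t0 sigma : R) :
  0 <= sigma <= 1 -> t0 + h + C sigma * - h = t0 + C (1 - sigma) * h.
Proof.
  intros Hs. rewrite (HC sigma Hs). ring.
Qed.

Lemma csRKN_step_reverse (f : R -> vec d -> vec d) (h t0 : R) (q0 p0 q1 p1 : vec d) :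
  csRKN_step d Abar Bbar B C f h t0 q0 p0 q1 p1 ->
  csRKN_step d Abar Bbar B C f (- h) (t0 + h) q1 p1 q0 p0.
Proof.
  intros [Q [HQ [Hq Hp]]].
  set (F i s := f (t0 + C s * h) (Q s) i).
  assert (Hrefl : forall (w : R -> R) i v,
            has_integral01 (fun s => w s * F i (1 - s)) v ->
            has_integral01 (fun s => w s * f (t0 + h + C s * - h) (Q (1 - s)) i) v).
  { intros w i v. apply has_integral01_ext. intros s Hs.
    unfold F. rewrite adjoint_stage_time by exact Hs.
    replace (1 - (1 - s)) with s by ring. reflexivity. }
  exists (fun tau => Q (1 - tau)). split; [|split].
  - intros tau Htau i.
    destruct (HQ (1 - tau) ltac:(lra) i) as [IA [HIA EA]].
    destruct (Hq i) as [IBbar [HIBbar Eq1]]. destruct (Hp i) as [IB [HIB Ep1]].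
    exists (C tau * IB - IBbar + IA). split.
    + apply Hrefl, reflected_Abar_integral; assumption.
    + rewrite EA, Eq1, Ep1, (HC tau Htau). ring.
  - intros i. destruct (Hq i) as [IBbar [HIBbar Eq1]]. destruct (Hp i) as [IB [HIB Ep1]].
    exists (IB - IBbar). split.
    + apply Hrefl, reflected_Bbar_integral; assumption.
    + rewrite Eq1, Ep1. ring.
  - intros i. destruct (Hp i) as [IB [HIB Ep1]].
    exists IB. split.
    + apply Hrefl, reflected_B_integral; assumption.
    + rewrite Ep1. ring.
Qed.

End ReflectedStep.

Theorem theorem3p2 (d : nat) (Abar : R -> R -> R) (Bbar B C : R -> R)
  (HC : forall tau, 0 <= tau <= 1 -> C tau = 1 - C (1 - tau))
  (HA : forall tau sigma, 0 <= tau <= 1 -> 0 <= sigma <= 1 ->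
          Abar tau sigma = B (1 - sigma) * (1 - C (1 - tau)) - Bbar (1 - sigma)
                           + Abar (1 - tau) (1 - sigma))
  (HBbar : forall tau, 0 <= tau <= 1 -> Bbar tau = B (1 - tau) - Bbar (1 - tau))
  (HB : forall tau, 0 <= tau <= 1 -> B tau = B (1 - tau)) :
  forall f : R -> vec d -> vec d, csRKN_symmetric d Abar Bbar B C f.
Proof.
  intros f h t0 q0 p0 q1 p1. split.
  - apply csRKN_step_reverse; assumption.
  - intros Hadj.
    pose proof (csRKN_step_reverse d Abar Bbar B C HC HA HBbar HB f _ _ _ _ _ _ Hadj) as Hstep.
    rewrite Ropp_involutive in Hstep.
    replace (t0 + h + - h) with t0 in Hstep by ring.
    exact Hstep.
Qed.
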